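(* Let $\mathcal{S}=\{S_1,\dots,S_N\}\subset\mathbb{R}^Q_{\ge0}$ and suppose $\rho\notin\mathcal{P}$. Let $\eta\in\mathbb{R}^Q_{\ge0}$. There exists a diagonal matrix $\Delta$ with positive diagonal entries such that, under MaxWeight with matrix $\Delta$, $\lim_{t\to\infty}X(t)/t=\eta$, if and only if the following conditions hold: (1) $\eta=(\rho-\sum_m\alpha_mS_m)^+$ for some $\alpha_m\ge0$ with $\sum_m\alpha_m=1$; (2) there exists $v\in\mathbb{R}^Q_{\ge0}$ such that $\alpha_m>0$ implies $\langle v,S_m\rangle\ge\langle v,S_k\rangle$ for all $k$, and moreover $v_q=0$ if and only if $\eta_q=0$.
   Context: Model: $Q$ queues, discrete time. Arrivals $A(t)$ with $0\le A_q(t)\le\bar A_q<\infty$ and $\rho_q=\lim_{t\to\infty}\frac1t\sum_{s=0}^{t-1}A_q(s)\in(0,\infty)$. Departures $D_q(t)=\min\{S_q(t),X_q(t)\}$, $X(t+1)=X(t)+A(t)-D(t)$, $X(0)=0$. MaxWeight with matrix $\Delta$: $S(t)\in\arg\max_{S\in\mathcal{S}}\langle S,\Delta X(t)\rangle$. $(x)^+$ is the componentwise positive part. Stability region $\mathcal{P}=\{r\in\mathbb{R}^Q_{\ge0}: r\le\sum_n\alpha_nS_n\text{ for some }\alpha_n\ge0,\sum_n\alpha_n=1\}$. *)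

From HB Require Import structures.
From mathcomp Require Import all_boot all_order all_algebra.
From mathcomp Require Import all_classical all_reals all_analysis.
Set Implicit Arguments. Unset Strict Implicit. Unset Printing Implicit Defensive.
Import Order.TTheory GRing.Theory Num.Theory.
Import numFieldNormedType.Exports.
Local Open Scope ring_scope.

Section QueueDefs.
Variables (R : realType) (Q N : nat).

Definition dot (x y : 'I_Q -> R) : R := \sum_(q < Q) x q * y q.

Definition mxv (D : 'M[R]_Q) (x : 'I_Q -> R) : 'I_Q -> R :=
  fun i => \sum_(j < Q) D i j * x j.

Definition pospart (x : 'I_Q -> R) : 'I_Q -> R := fun q => Num.max 0 (x q).

Fixpoint qlen (A : nat -> 'I_Q -> R) (Sc : nat -> 'I_Q -> R) (t : nat)
  : 'I_Q -> R :=
  match t with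
  | 0 => fun _ => 0
  | t'.+1 => fun q => qlen A Sc t' q + A t' q - Num.min (Sc t' q) (qlen A Sc t' q)
  end.

Definition maxweight (S : 'I_N -> 'I_Q -> R) (D : 'M[R]_Q)
  (A : nat -> 'I_Q -> R) (sigma : nat -> 'I_N) : Prop :=
  forall t (k : 'I_N),
    let X := qlen A (fun s => S (sigma s)) t in
    dot (S k) (mxv D X) <= dot (S (sigma t)) (mxv D X).

Definition in_region (S : 'I_N -> 'I_Q -> R) (r : 'I_Q -> R) : Prop :=
  (forall q, 0 <= r q) /\
  exists alpha : 'I_N -> R,
    (forall n, 0 <= alpha n) /\ \sum_(n < N) alpha n = 1 /\
    forall q, r q <= \sum_(n < N) alpha n * S n q.

Definition pos_diag (D : 'M[R]_Q) : Prop :=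
  is_diag_mx D /\ forall i, 0 < D i i.

End QueueDefs.

From HB Require Import structures.
From mathcomp Require Import all_boot all_order all_algebra.
From mathcomp Require Import all_classical all_reals all_analysis.
From mathcomp.algebra_tactics Require Import ring lra.
Import Order.TTheory GRing.Theory Num.Theory.
Import numFieldNormedType.Exports.
Set Implicit Arguments. Unset Strict Implicit. Unset Printing Implicit Defensive.
Local Open Scope classical_set_scope.
Local Open Scope ring_scope.

(* If the conditions hold, take Delta = diag(v_q / eta_q) (and 1 where eta_q = 0), so that
   Delta eta = v, and follow the deviation Y(t) = X(t) - eta t.  For
   V(t) = sum_q Delta_q Y_q(t)^2 the cross term sum_q Delta_q Y_q (sum_n alpha_n S_n - S_sigma(t))_q
   is nonpositive: it splits into the MaxWeight losses against Delta X(t), which are <= 0, minus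
   t times the gains <v, S_n> - <v, S_sigma(t)>, which are >= 0 on the support of alpha.
   Hence V(t) <= 2 sum_{s<t} <Delta Y(s), A(s) - rho> + O(t) = o(t^2), by summation by parts,
   since Y has bounded increments and A(s) - rho has Cesaro mean 0; so Y(t)/t -> 0.
   Conversely, run MaxWeight with the given Delta and let alpha be a limit point of the
   empirical schedule frequencies.  Queues with eta_q > 0 are eventually never idle, which
   forces eta_q = (rho - sum_n alpha_n S_n)_q, and the others satisfy rho_q <= (sum_n alpha_n S_n)_q.
   A schedule whose weight <Delta X(t)/t, S_m> -> <Delta eta, S_m> is eventually beaten is
   eventually never used, so alpha is supported by maximizers of <v, .> with v = Delta eta. *)

Section Asymptotics.
Variable R : realType.

Lemma cvg_divn (a : R) : (fun t : nat => a / t%:R) @ \oo --> 0.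
Proof.
rewrite -(mulr0 a); apply: cvgMl_tmp.
by rewrite gtr0_cvgV0; [exact: cvgr_idn | near=> t; rewrite ltr0n; near: t; exact: nbhs_infty_gt].
Unshelve. all: end_near. Qed.

Lemma increasing_seq_cvg_oo (f : nat -> nat) :
  (forall n, (f n < f n.+1)%N) -> f @ \oo --> \oo.
Proof.
move=> hf; have le_f n : (n <= f n)%N.
  by elim: n => // n IH; apply: leq_ltn_trans IH (hf n).
move=> P [M _ HP]; exists M => // n /= hn; apply: HP => /=.
exact: leq_trans hn (le_f n).
Qed.

Lemma bounded_cvg_subseq (m : nat) (u : nat -> 'I_m -> R) (B : R) :
  (forall t i, `|u t i| <= B) ->
  exists2 f : nat -> nat, f @ \oo --> \oo &
    exists l : 'I_m -> R, forall i, (fun k => u (f k) i) @ \oo --> l i.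
Proof.
elim: m u => [|m IH] u uB.
  by exists id => //; exists (fun=> 0) => -[].
have [f1 f1oo [l1 hl1]] := IH (fun t j => u t (lift ord_max j)) (fun t j => uB t _).
have : bounded_fun (fun k => u (f1 k) ord_max).
  by exists B; split; rewrite ?num_real // => x Bx k _; apply: le_trans (uB _ _) (ltW Bx).
move=> /bolzano_weierstrass[f2 /increasing_seqP f2incr /cvg_ex[l0 hl0]].
exists (f1 \o f2); first exact: cvg_comp _ _ (increasing_seq_cvg_oo f2incr) f1oo.
exists (fun i => oapp l1 l0 (unlift ord_max i)) => i.
case: unliftP => [j ->|->] /=; last exact: hl0.
exact: cvg_comp _ _ (increasing_seq_cvg_oo f2incr) (hl1 j).
Qed.

Lemma cvg_sqr_0 (u : nat -> R) : (fun t => u t ^+ 2) @ \oo --> 0 -> u @ \oo --> 0.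
Proof.
move=> /cvgr0Pnorm_lt u2; apply/cvgr0Pnorm_lt => e e0.
apply: filterS (u2 _ (exprn_gt0 2 e0)) => t.
rewrite ger0_norm ?sqr_ge0 // => ut.
by rewrite -(ltr_pXn2r (ltn0Sn 1)) ?nnegrE ?normr_ge0 ?ltW // real_normK ?num_real.
Qed.

Lemma cvg_sum_ord (n : nat) (u : nat -> 'I_n -> R) (l : 'I_n -> R) :
  (forall i, (fun t => u t i) @ \oo --> l i) ->
  (fun t => \sum_(i < n) u t i) @ \oo --> \sum_(i < n) l i.
Proof. by move=> ul; apply: cvg_big => //; exact: add_continuous. Qed.

Lemma cvg_mean_centered (a : nat -> R) (l : R) :
  (fun t => (\sum_(s < t) a s) / t%:R) @ \oo --> l ->
  (fun t => (\sum_(s < t) (a s - l)) / t%:R) @ \oo --> 0.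
Proof.
move=> al; have : (fun t => (\sum_(s < t) a s) / t%:R - l) @ \oo --> l - l.
  exact: cvgB al (cvg_cst l).
rewrite subrr; apply: cvg_trans.
apply: near_eq_cvg; near=> t => /=.
rewrite sumrB sumr_const card_ord mulrBl -[l *+ t]mulr_natr mulfK // pnatr_eq0 -lt0n.
by near: t; exact: nbhs_infty_gt.
Unshelve. all: end_near. Qed.

End Asymptotics.

Section Abel.
Variable R : realType.
Implicit Types (y e : nat -> R).

Lemma abel_summation y e t :
  \sum_(s < t) y s * e s =
  y t * \sum_(s < t) e s - \sum_(s < t) (y s.+1 - y s) * \sum_(r < s.+1) e r.
Proof.
elim: t => [|t IH]; first by rewrite !big_ord0 mulr0 subr0.
by rewrite !big_ord_recr /= IH; ring.
Qed.

Lemma abel_sum_cvg0 y e (K : R) : y 0%N = 0 ->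
  (forall s, `|y s.+1 - y s| <= K) ->
  (fun t => (\sum_(s < t) e s) / t%:R) @ \oo --> 0 ->
  (fun t => (\sum_(s < t) y s * e s) / t%:R ^+ 2) @ \oo --> 0.
Proof.
(* After summation by parts, |sum_{s<t} y_s e_s| / t^2 <= K |b t| + K (sum_{s<t} |b (s+1)|) / t,
   where b t is the mean of e up to t; both terms vanish, the second by Cesaro's lemma. *)
move=> y0 yK.
set B := fun t => \sum_(s < t) e s; set b := fun t => B t / t%:R => b0.
have yt t : `|y t| <= K * t%:R.
  elim: t => [|t IH]; first by rewrite y0 normr0 mulr0.
  rewrite -natr1 mulrDr mulr1 -[y t.+1](subrK (y t)).
  by apply: le_trans (ler_normD _ _) _; rewrite addrC lerD.
have Bt t : `|B t| = t%:R * `|b t|.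
  case: t => [|t]; first by rewrite /B big_ord0 normr0 mul0r.
  by rewrite /b normrM normfV normr_nat mulrCA divff ?mulr1 ?pnatr_eq0.
pose c s := `|b s.+1|.
pose h n := K * `|b n.+1| + K * arithmetic_mean c n.
have c0 : c @ \oo --> 0.
  by rewrite -(@normr0 _ R^o); apply: cvg_norm; rewrite (cvg_shiftS b).
have h0 : h @ \oo --> 0.
  by rewrite /h -[0]addr0 -(mulr0 K); apply: cvgD; apply: cvgMl_tmp => //; exact: cesaro.
have Nh0 : (fun n => - h n) @ \oo --> 0 by rewrite -oppr0; exact: cvgN.
rewrite -(cvg_shiftS _ (nbhs (0 : R))) /=.
apply: (squeeze_cvgr _ Nh0 h0).
apply: nearW => n /=; rewrite -ler_norml abel_summation.
have T0 : 0 < n.+1%:R :> R by rewrite ltr0n.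
rewrite normrM normfV normrX normr_nat ler_pdivrMr ?exprn_gt0 //.
have -> : h n * n.+1%:R ^+ 2 =
    K * n.+1%:R * (n.+1%:R * `|b n.+1|) + K * n.+1%:R * \sum_(s < n.+1) c s.
  rewrite /h /arithmetic_mean /= seriesEnat /= big_mkord.
  by field; rewrite lt0r_neq0.
apply: le_trans (ler_normB _ _) _; apply: lerD.
  by rewrite normrM -Bt; apply: ler_pM => //; exact: normr_ge0.
apply: le_trans (ler_norm_sum _ _ _) _; rewrite mulr_sumr; apply: ler_sum => s _.
rewrite normrM (Bt s.+1) mulrA; apply: ler_wpM2r; first exact: normr_ge0.
by apply: ler_pM (normr_ge0 _) _ (yK s) _; rewrite ?ler_nat.
Qed.

End Abel.

Section QueueDynamics.
Variables (R : realType) (Q : nat) (A Sc : nat -> 'I_Q -> R).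

Lemma qlen_sum t q : qlen A Sc t q =
  \sum_(s < t) A s q - \sum_(s < t) Num.min (Sc s q) (qlen A Sc s q).
Proof.
elim: t => [|t IH]; first by rewrite !big_ord0 subr0.
by rewrite !big_ord_recr /= IH; ring.
Qed.

Hypothesis A_ge0 : forall t q, 0 <= A t q.

Lemma qlen_ge0 t q : 0 <= qlen A Sc t q.
Proof.
case: t => [|t] //=; have := A_ge0 t q.
have : Num.min (Sc t q) (qlen A Sc t q) <= qlen A Sc t q by rewrite ge_min lexx orbT.
lra.
Qed.

Hypothesis Sc_ge0 : forall t q, 0 <= Sc t q.

Lemma served_ge0 t q : 0 <= Num.min (Sc t q) (qlen A Sc t q).
Proof. by rewrite le_min Sc_ge0 qlen_ge0. Qed.

Lemma served_le t q : Num.min (Sc t q) (qlen A Sc t q) <= Sc t q.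
Proof. by rewrite ge_min lexx. Qed.

End QueueDynamics.

Section PosDiag.
Variables (R : realType) (Q : nat).

Lemma mxv_pos_diag (D : 'M[R]_Q) x q : pos_diag D -> mxv D x q = D q q * x q.
Proof.
move=> [/is_diag_mxP D_diag _]; rewrite /mxv (bigD1 q) //= big1 ?addr0 // => j jq.
by rewrite D_diag ?mul0r // eq_sym.
Qed.

Lemma pos_diag_mx (d : 'I_Q -> R) : (forall q, 0 < d q) ->
  pos_diag (diag_mx (\row_i d i)).
Proof. by move=> d_gt0; split=> [|i]; rewrite ?diag_mx_is_diag // !mxE eqxx mulr1n. Qed.

End PosDiag.

Lemma entry_le_sum (R : realType) (N Q : nat) (S : 'I_N -> 'I_Q -> R) :
  (forall n q, 0 <= S n q) -> forall n q, S n q <= \sum_(m < N) \sum_(p < Q) S m p.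
Proof.
move=> S_ge0 n q; rewrite (bigD1 n) //= (bigD1 q) //= -addrA lerDl.
by rewrite addr_ge0 // sumr_ge0 // => *; rewrite ?sumr_ge0.
Qed.

Section MaxWeightStable.
Variables (R : realType) (Q N : nat) (S : 'I_N -> 'I_Q -> R).
Variables (A : nat -> 'I_Q -> R) (Abar rho : 'I_Q -> R).
Hypothesis S_ge0 : forall n q, 0 <= S n q.
Hypothesis A_bnd : forall t q, 0 <= A t q <= Abar q.
Variables (alpha : 'I_N -> R) (eta v : 'I_Q -> R) (D : 'M[R]_Q) (sigma : nat -> 'I_N).
Hypothesis alpha_ge0 : forall n, 0 <= alpha n.
Hypothesis alpha_sum1 : \sum_(n < N) alpha n = 1.
Hypothesis eta_def : eta = pospart (fun q => rho q - \sum_(n < N) alpha n * S n q).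
Hypothesis alpha_v_opt : forall m, 0 < alpha m -> forall k, dot v (S k) <= dot v (S m).
Hypothesis D_pos : pos_diag D.
Hypothesis D_eta : forall q, D q q * eta q = v q.
Hypothesis sigma_mw : maxweight S D A sigma.

Let c := \sum_(n < N) \sum_(q < Q) S n q.
Let T q := \sum_(n < N) alpha n * S n q.
Let X := qlen A (fun s => S (sigma s)).
Let Y t q := X t q - eta q * t%:R.
Let K q := Abar q + eta q + c.

Let eta_ge0 q : 0 <= eta q.
Proof. by rewrite eta_def /pospart le_max lexx. Qed.

Let S_le_c n q : S n q <= c := entry_le_sum S_ge0 n q.

Let A_ge0 t q : 0 <= A t q.
Proof. by case/andP: (A_bnd t q). Qed.

Let X_ge0 t q : 0 <= X t q.
Proof. exact: qlen_ge0. Qed.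

Let served_bnd t q : 0 <= Num.min (S (sigma t) q) (X t q) <= S (sigma t) q.
Proof.
by rewrite served_le (served_ge0 A_ge0 (fun s p => S_ge0 (sigma s) p)).
Qed.

Let Y_step t q :
  Y t.+1 q = Y t q + (A t q - eta q - Num.min (S (sigma t) q) (X t q)).
Proof. by rewrite /Y /X /= -natr1; ring. Qed.

Lemma Y_step_bound t q : `|Y t.+1 q - Y t q| <= K q.
Proof.
rewrite Y_step addrC addKr ler_norml /K.
have /andP[At_ge0 At_le] := A_bnd t q.
have /andP[m_ge0 m_le] := served_bnd t q.
have := S_le_c (sigma t) q; have := eta_ge0 q; lra.
Qed.

Lemma Y_slack_le0 t q : Y t q * (rho q - eta q - T q) <= 0.
Proof.
have eta_max : eta q = Num.max 0 (rho q - T q) by rewrite eta_def.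
have [rT|rT] := leP (rho q - T q) 0.
  by rewrite /Y eta_max max_l // mul0r !subr0 mulr_ge0_le0.
rewrite eta_max max_r ?(ltW rT) //.
by rewrite (_ : rho q - (rho q - T q) - T q = 0) ?mulr0 //; ring.
Qed.

Lemma Y_idle_le t q :
  Y t q * (S (sigma t) q - Num.min (S (sigma t) q) (X t q)) <= c ^+ 2.
Proof.
have /andP[m_ge0 m_le] := served_bnd t q.
have Sc := S_le_c (sigma t) q; have ht : 0 <= eta q * t%:R by rewrite mulr_ge0.
rewrite /Y; have [Sx|xS] := leP (S (sigma t) q) (X t q); first by rewrite subrr mulr0 sqr_ge0.
have := X_ge0 t q; nra.
Qed.

Lemma maxweight_tradeoff t :
  \sum_(q < Q) D q q * Y t q * (T q - S (sigma t) q) <= 0.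
Proof.
pose W n := \sum_(q < Q) D q q * Y t q * (S n q - S (sigma t) q).
have W_eq n : W n = (dot (S n) (mxv D (X t)) - dot (S (sigma t)) (mxv D (X t)))
    - t%:R * (dot v (S n) - dot v (S (sigma t))).
  rewrite /W /dot -!sumrB mulr_sumr -sumrB; apply: eq_bigr => q _.
  by rewrite mxv_pos_diag // -D_eta /Y; ring.
have alphaW_le0 n : alpha n * W n <= 0.
  have [alpha0|alpha_gt0] := eqVneq (alpha n) 0; first by rewrite alpha0 mul0r.
  have mw : dot (S n) (mxv D (X t)) <= dot (S (sigma t)) (mxv D (X t)).
    exact: sigma_mw.
  have opt : dot v (S (sigma t)) <= dot v (S n).
    by apply: alpha_v_opt; rewrite lt0r alpha_gt0 alpha_ge0.
  have tv : 0 <= t%:R * (dot v (S n) - dot v (S (sigma t))) by rewrite mulr_ge0 ?subr_ge0.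
  by apply: mulr_ge0_le0 => //; rewrite W_eq; lra.
have -> : \sum_(q < Q) D q q * Y t q * (T q - S (sigma t) q) = \sum_(n < N) alpha n * W n.
  rewrite /W; under [RHS]eq_bigr => n _ do rewrite mulr_sumr.
  rewrite exchange_big /=; apply: eq_bigr => q _.
  have -> : T q - S (sigma t) q = \sum_(n < N) alpha n * (S n q - S (sigma t) q).
    rewrite /T -[S _ q in LHS]mul1r -alpha_sum1 mulr_suml -sumrB.
    by apply: eq_bigr => n _; rewrite mulrBr.
  by rewrite mulr_sumr; apply: eq_bigr => n _; ring.
exact: sumr_le0.
Qed.

Let K2 q := 2 * c ^+ 2 + K q ^+ 2.

(* Expand Y(t+1) = Y(t) + (A - eta - served): the drift splits into the arrival noise, the
   cross term, the slack (<= 0) and the idle service (<= c^2), plus a bounded squared jump. *)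
Lemma Y_sqr_step t q : Y t.+1 q ^+ 2 - Y t q ^+ 2 <=
  2 * (Y t q * (A t q - rho q)) + K2 q + 2 * (Y t q * (T q - S (sigma t) q)).
Proof.
have idle := Y_idle_le t q; have slack := Y_slack_le0 t q.
have jump : (Y t.+1 q - Y t q) ^+ 2 <= K q ^+ 2.
  by rewrite -real_normK ?num_real // lerXn2r ?nnegrE ?normr_ge0 ?Y_step_bound //;
    apply: le_trans (Y_step_bound t q); exact: normr_ge0.
move: jump; rewrite /K2 Y_step; lra.
Qed.

Lemma lyapunov_drift t :
  \sum_(q < Q) D q q * (Y t.+1 q ^+ 2 - Y t q ^+ 2) <=
  \sum_(q < Q) D q q * (2 * (Y t q * (A t q - rho q)) + K2 q).
Proof.
apply: le_trans (_ : _ <= \sum_(q < Q) D q q * (2 * (Y t q * (A t q - rho q)) + K2 q)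
   + 2 * \sum_(q < Q) D q q * Y t q * (T q - S (sigma t) q)) _; last first.
  by rewrite gerDl pmulr_rle0 ?maxweight_tradeoff.
rewrite mulr_sumr -big_split /=; apply: ler_sum => q _.
have Dq : 0 < D q q := D_pos.2 q.
by rewrite -mulrA [2 * (D q q * _)]mulrCA -mulrDr ler_pM2l // Y_sqr_step.
Qed.

Let B t := \sum_(q < Q) D q q * (2 * \sum_(s < t) Y s q * (A s q - rho q) + t%:R * K2 q).

Lemma lyapunov_bound t : \sum_(q < Q) D q q * Y t q ^+ 2 <= B t.
Proof.
elim: t => [|t IH].
  rewrite big1 => [|q _]; last by rewrite /Y /X /= mulr0 subr0 expr0n mulr0.
  by apply: sumr_ge0 => q _; rewrite big_ord0 mulr0 mul0r addr0 mulr0.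
rewrite -[X in X <= _](subrK (\sum_(q < Q) D q q * Y t q ^+ 2)) -sumrB.
under eq_bigr do rewrite -mulrBr.
apply: le_trans (lerD (lyapunov_drift t) IH) _.
rewrite -big_split /=; apply: ler_sum => q _.
by rewrite -mulrDr big_ord_recr /= -natr1; lra.
Qed.

Hypothesis rho_rate :
  forall q, (fun t => (\sum_(s < t) A s q) / t%:R) @ \oo --> rho q.

Lemma lyapunov_bound_rate : (fun t => B t / t%:R ^+ 2) @ \oo --> 0.
Proof.
have abel q : (fun t => (\sum_(s < t) Y s q * (A s q - rho q)) / t%:R ^+ 2) @ \oo --> 0.
  apply: (@abel_sum_cvg0 _ (Y^~ q) (fun s => A s q - rho q) (K q)).
  - by rewrite /Y /X /= mulr0 subr0.
  - by move=> s; exact: Y_step_bound.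
  - exact: (@cvg_mean_centered _ (fun s => A s q) _ (@rho_rate q)).
have : (fun t => \sum_(q < Q) D q q *
    (2 * ((\sum_(s < t) Y s q * (A s q - rho q)) / t%:R ^+ 2) + K2 q / t%:R))
    @ \oo --> \sum_(q < Q) D q q * (2 * 0 + 0).
  apply: cvg_sum_ord => q; apply: cvgMl_tmp; apply: cvgD; last exact: cvg_divn.
  exact: cvgMl_tmp.
rewrite big1 => [|q _]; last by rewrite mulr0 addr0 mulr0.
apply: cvg_trans; apply: near_eq_cvg; near=> t => /=.
have t0 : t%:R != 0 :> R by rewrite pnatr_eq0 -lt0n; near: t; exact: nbhs_infty_gt.
by rewrite /B mulr_suml; apply: eq_bigr => q _; field.
Unshelve. all: end_near. Qed.

Lemma Y_rate q : (fun t => Y t q / t%:R) @ \oo --> 0.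
Proof.
apply: cvg_sqr_0.
have Dq : 0 < D q q := D_pos.2 q.
have bound0 : (fun t => (D q q)^-1 * (B t / t%:R ^+ 2)) @ \oo --> 0.
  by rewrite -(mulr0 (D q q)^-1); apply: cvgMl_tmp; exact: lyapunov_bound_rate.
have zero0 : (fun=> 0) @ \oo --> (0 : R) by exact: cvg_cst.
apply: (squeeze_cvgr _ zero0 bound0); apply: nearW => t /=.
rewrite sqr_ge0 expr_div_n mulrA ler_wpM2r ?invr_ge0 ?sqr_ge0 //.
rewrite ler_pdivlMl //; apply: le_trans (lyapunov_bound t).
rewrite (bigD1 q) //= lerDl; apply: sumr_ge0 => p _.
by rewrite mulr_ge0 ?sqr_ge0 // ltW // D_pos.2.
Qed.

Lemma qlen_rate q : (fun t => X t q / t%:R) @ \oo --> eta q.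
Proof.
have : (fun t => Y t q / t%:R + eta q) @ \oo --> 0 + eta q.
  by apply: cvgD; [exact: Y_rate | exact: cvg_cst].
rewrite add0r; apply: cvg_trans.
apply: near_eq_cvg; near=> t => /=.
have t0 : t%:R != 0 :> R by rewrite pnatr_eq0 -lt0n; near: t; exact: nbhs_infty_gt.
by rewrite /Y mulrBl mulfK // subrK.
Unshelve. all: end_near. Qed.

End MaxWeightStable.

Lemma maxweight_exists (R : realType) (Q N : nat) (S : 'I_N -> 'I_Q -> R)
    (D : 'M[R]_Q) (A : nat -> 'I_Q -> R) :
  (0 < N)%N -> exists sigma, maxweight S D A sigma.
Proof.
move=> N_gt0; pose best x := [arg max_(i > Ordinal N_gt0) dot (S i) (mxv D x)]%O.
have bestP x k : dot (S k) (mxv D x) <= dot (S (best x)) (mxv D x).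
  by rewrite /best; case: arg_maxP => // i _; apply.
pose fix Xg t := if t is t'.+1 then
  fun q => Xg t' q + A t' q - Num.min (S (best (Xg t')) q) (Xg t' q) else fun=> 0.
exists (fun t => best (Xg t)) => t k /=.
suff -> : qlen A (fun s => S (best (Xg s))) t = Xg t by exact: bestP.
by elim: t => //= t IH; rewrite IH.
Qed.

Section Frequencies.
Variables (R : realType) (N : nat) (sigma : nat -> 'I_N).

Definition sched_freq t n : R := (\sum_(s < t) ((sigma s == n)%:R : R)) / t%:R.

Lemma sched_count_le t n : \sum_(s < t) ((sigma s == n)%:R : R) <= t%:R.
Proof.
rewrite -[t in t%:R]card_ord -sumr_const; apply: ler_sum => s _.
by case: eqP; rewrite ?ler01.
Qed.

Lemma sched_freq_ge0 t n : 0 <= sched_freq t n.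
Proof. by rewrite divr_ge0 // sumr_ge0. Qed.

Lemma sched_freq_le1 t n : sched_freq t n <= 1.
Proof.
case: t => [|t]; first by rewrite /sched_freq invr0 mulr0.
by rewrite ler_pdivrMr ?ltr0n // mul1r sched_count_le.
Qed.

Lemma sum_sched_freq t : (0 < t)%N -> \sum_(n < N) sched_freq t n = 1.
Proof.
move=> t_gt0; rewrite -mulr_suml exchange_big /=.
have one s : \sum_(n < N) ((sigma s == n)%:R : R) = 1.
  by rewrite (bigD1 (sigma s)) //= eqxx big1 ?addr0 // => n; rewrite eq_sym => /negbTE ->.
by under eq_bigr do rewrite one; rewrite sumr_const card_ord divff // pnatr_eq0 -lt0n.
Qed.

Lemma sum_sched_entries (Q : nat) (S : 'I_N -> 'I_Q -> R) t q : (0 < t)%N ->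
  \sum_(s < t) S (sigma s) q = t%:R * \sum_(n < N) sched_freq t n * S n q.
Proof.
move=> t_gt0; rewrite mulr_sumr.
have freqE n : t%:R * (sched_freq t n * S n q) =
    \sum_(s < t) ((sigma s == n)%:R : R) * S n q.
  by rewrite /sched_freq -mulr_suml; field; rewrite pnatr_eq0 -lt0n.
under [RHS]eq_bigr do rewrite freqE.
rewrite exchange_big /=; apply: eq_bigr => s _.
rewrite (bigD1 (sigma s)) //= eqxx mul1r big1 ?addr0 // => n.
by rewrite eq_sym => /negbTE ->; rewrite mul0r.
Qed.

Lemma sched_freq_vanish n : (\forall t \near \oo, sigma t != n) ->
  (fun t => sched_freq t n) @ \oo --> 0.
Proof.
move=> [M _ not_n].
have count_le t : \sum_(s < t) ((sigma s == n)%:R : R) <= M%:R.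
  elim: t => [|t IH]; first by rewrite big_ord0.
  rewrite big_ord_recr /=; have [tM|Mt] := ltnP t M; last by rewrite (negbTE (not_n t Mt)) addr0.
  apply: le_trans (lerD (sched_count_le t n) (_ : _ <= 1)) _; first by case: eqP; rewrite ?ler01.
  by rewrite natr1 ler_nat.
have zero0 : (fun=> 0) @ \oo --> (0 : R) by exact: cvg_cst.
apply: (squeeze_cvgr _ zero0 (cvg_divn M%:R)); apply: nearW => t.
by rewrite sched_freq_ge0 ler_wpM2r ?invr_ge0.
Qed.

End Frequencies.

Section MaxWeightRate.
Variables (R : realType) (Q N : nat) (S : 'I_N -> 'I_Q -> R).
Variables (A : nat -> 'I_Q -> R) (rho eta : 'I_Q -> R).
Variables (D : 'M[R]_Q) (sigma : nat -> 'I_N).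
Hypothesis S_ge0 : forall n q, 0 <= S n q.
Hypothesis rho_rate :
  forall q, (fun t => (\sum_(s < t) A s q) / t%:R) @ \oo --> rho q.
Hypothesis D_pos : pos_diag D.
Hypothesis sigma_mw : maxweight S D A sigma.
Hypothesis sigma_rate :
  forall q, (fun t => qlen A (fun s => S (sigma s)) t q / t%:R) @ \oo --> eta q.

Let c := \sum_(n < N) \sum_(q < Q) S n q.
Let X := qlen A (fun s => S (sigma s)).
Let freq := @sched_freq R N sigma.

Variables (f : nat -> nat) (alpha : 'I_N -> R).
Hypothesis f_oo : f @ \oo --> \oo.
Hypothesis freq_alpha : forall n, (fun k => freq (f k) n) @ \oo --> alpha n.

Let T q := \sum_(n < N) alpha n * S n q.

Let f_gt0 : \forall k \near \oo, (0 < f k)%N.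
Proof. exact: f_oo (nbhs_infty_gt 0). Qed.

Lemma alpha_ge0 n : 0 <= alpha n.
Proof.
have zero0 : (fun=> 0) @ \oo --> (0 : R) by exact: cvg_cst.
by apply: ler_cvg_to zero0 (@freq_alpha n) _; apply: nearW => k; exact: sched_freq_ge0.
Qed.

Lemma alpha_sum1 : \sum_(n < N) alpha n = 1.
Proof.
have one : (fun k => \sum_(n < N) freq (f k) n) @ \oo --> (1 : R).
  apply/cvgrPdist_lt => e e_gt0; near=> k.
  by rewrite sum_sched_freq ?subrr ?normr0 //; near: k.
exact: cvg_unique _ (cvg_sum_ord (fun n => @freq_alpha n)) one.
Unshelve. all: end_near. Qed.

Let service_rate q :
  (fun k => \sum_(n < N) freq (f k) n * S n q) @ \oo --> T q.
Proof. by apply: cvg_sum_ord => n; apply: cvgMr_tmp. Qed.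

Lemma rho_sub_eta_le q : rho q - eta q <= T q.
Proof.
have net : (fun k => (\sum_(s < f k) A s q) / (f k)%:R - X (f k) q / (f k)%:R)
    @ \oo --> rho q - eta q.
  by apply: cvgB; [exact: (cvg_comp _ _ f_oo (@rho_rate q)) |
                   exact: (cvg_comp _ _ f_oo (@sigma_rate q))].
apply: ler_cvg_to net (@service_rate q) _.
near=> k; have t_gt0 : (0 < f k)%N by near: k.
rewrite /= -mulrBl ler_pdivrMr ?ltr0n // mulrC -sum_sched_entries //.
rewrite /X qlen_sum opprB addrA addrAC subrr add0r.
by apply: ler_sum => s _; exact: served_le.
Unshelve. all: end_near. Qed.

Lemma qlen_eventually_ge q : 0 < eta q -> \forall t \near \oo, c <= X t q.
Proof.
move=> eta_gt0; have eta2 : eta q / 2 < eta q by rewrite ltr_pdivrMr // ltr_pMr // ltr1n.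
near=> t.
have t_big : 2 * c / eta q <= t%:R by near: t; exact: nbhs_infty_ger.
have X_big : eta q / 2 < X t q / t%:R by near: t; exact: cvgr_gt _ (@sigma_rate q) _ eta2.
have t_gt0 : (0 < t)%N by near: t; exact: nbhs_infty_gt.
move: t_big X_big; rewrite ler_pdivrMr // ltr_pdivlMr ?ltr0n //; nra.
Unshelve. all: end_near. Qed.

Let idle q s := S (sigma s) q - Num.min (S (sigma s) q) (X s q).

Lemma idle_sum_const q M t : (forall s, (M <= s)%N -> c <= X s q) -> (M <= t)%N ->
  \sum_(s < t) idle q s = \sum_(s < M) idle q s.
Proof.
move=> X_big /subnKC <-; elim: (t - M)%N => [|d IH]; first by rewrite addn0.
rewrite addnS big_ord_recr /= IH /idle min_l ?subrr ?addr0 //.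
exact: le_trans (entry_le_sum S_ge0 _ _) (X_big _ (leq_addr _ _)).
Qed.

Lemma eta_gt0_balance q : 0 < eta q -> eta q = rho q - T q.
Proof.
(* From time M on the queue never idles, so X = cumulated arrivals - cumulated service + E. *)
move=> eta_gt0; have [M _ X_big] := qlen_eventually_ge eta_gt0.
pose E := \sum_(s < M) idle q s.
have net : (fun k => (\sum_(s < f k) A s q) / (f k)%:R - X (f k) q / (f k)%:R
    + E / (f k)%:R) @ \oo --> rho q - eta q + 0.
  apply: cvgD; last exact: (cvg_comp _ _ f_oo (cvg_divn E)).
  by apply: cvgB; [exact: (cvg_comp _ _ f_oo (@rho_rate q)) |
                   exact: (cvg_comp _ _ f_oo (@sigma_rate q))].
suff -> : T q = rho q - eta q by ring.
suff lim_T : (fun k => \sum_(n < N) freq (f k) n * S n q) @ \oo --> rho q - eta q.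
  exact: cvg_unique _ (@service_rate q) lim_T.
rewrite -[rho q - eta q]addr0; apply: cvg_trans net; apply: near_eq_cvg; near=> k => /=.
have t_gt0 : (0 < f k)%N by near: k.
have Mk : (M <= f k)%N by near: k; exact: f_oo (nbhs_infty_ge M).
have Xk : X (f k) q = \sum_(s < f k) A s q - \sum_(s < f k) S (sigma s) q + E.
  by rewrite /E -(idle_sum_const X_big Mk) /X qlen_sum /idle sumrB; ring.
rewrite Xk (sum_sched_entries sigma S) //; field; by rewrite pnatr_eq0 -lt0n.
Unshelve. all: end_near. Qed.

Hypothesis eta_ge0 : forall q, 0 <= eta q.

Lemma eta_pospart :
  eta = pospart (fun q => rho q - \sum_(n < N) alpha n * S n q).
Proof.
apply/funext => q; rewrite /pospart.
have [eta0|eta_neq0] := eqVneq (eta q) 0.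
  have := rho_sub_eta_le q; rewrite eta0 subr0 => rho_le.
  by rewrite max_l // subr_le0.
have eta_gt0 : 0 < eta q by rewrite lt0r eta_neq0 eta_ge0.
by rewrite -(eta_gt0_balance eta_gt0) max_r // ltW.
Qed.

Let v q := D q q * eta q.

Lemma alpha_support_opt m : 0 < alpha m -> forall k, dot v (S k) <= dot v (S m).
Proof.
move=> alpha_m_gt0 k; rewrite leNgt; apply/negP => gap.
pose adv t := dot (S k) (mxv D (X t)) - dot (S m) (mxv D (X t)).
have adv_rate : (fun t => adv t / t%:R) @ \oo --> dot v (S k) - dot v (S m).
  have -> : dot v (S k) - dot v (S m) = \sum_(q < Q) (S k q - S m q) * D q q * eta q.
    by rewrite /dot -sumrB; apply: eq_bigr => q _; rewrite /v; ring.
  have lim : (fun t => \sum_(q < Q) (S k q - S m q) * D q q * (X t q / t%:R))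
      @ \oo --> \sum_(q < Q) (S k q - S m q) * D q q * eta q.
    by apply: cvg_sum_ord => q; apply: cvgMl_tmp; exact: sigma_rate.
  apply: cvg_trans lim; apply: near_eq_cvg; apply: nearW => t /=.
  rewrite /adv /dot -sumrB mulr_suml; apply: eq_bigr => q _.
  by rewrite !mxv_pos_diag //; ring.
have never_m : \forall t \near \oo, sigma t != m.
  near=> t; apply/eqP => sigma_m.
  have : 0 < adv t / t%:R.
    by near: t; apply: (cvgr_gt _ adv_rate); rewrite subr_gt0.
  have := sigma_mw t k; rewrite /= sigma_m -subr_le0 => adv_le0.
  by rewrite ltNge mulr_le0_ge0 // invr_ge0.
have alpha_m0 : alpha m = 0.
  exact: cvg_unique _ (@freq_alpha m) (cvg_comp _ _ f_oo (sched_freq_vanish never_m)).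
by move: alpha_m_gt0; rewrite alpha_m0 ltxx.
Unshelve. all: end_near. Qed.

End MaxWeightRate.

Lemma pos_scaling_exists (R : realType) (Q : nat) (eta v : 'I_Q -> R) :
  (forall q, 0 <= eta q) -> (forall q, 0 <= v q) -> (forall q, v q = 0 <-> eta q = 0) ->
  exists2 d : 'I_Q -> R, forall q, 0 < d q & forall q, d q * eta q = v q.
Proof.
(* Where eta_q = 0 also v_q = 0, so any positive weight will do. *)
move=> eta_ge0 v_ge0 v0; exists (fun q => if eta q == 0 then 1 else v q / eta q) => q.
  case: eqP => // /eqP eta_neq0; rewrite divr_gt0 // lt0r ?eta_neq0 ?eta_ge0 //.
  by rewrite v_ge0 andbT; apply: contra eta_neq0 => /eqP /v0 ->.
case: eqP => [eta0|/eqP eta_neq0]; last by rewrite divfK.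
by rewrite eta0 mulr0 (proj2 (v0 q) eta0).
Qed.

Theorem proposition3 (R : realType) (Q N : nat)
  (S : 'I_N -> 'I_Q -> R) (A : nat -> 'I_Q -> R) (Abar : 'I_Q -> R)
  (rho eta : 'I_Q -> R) :
  (0 < N)%N ->
  (forall n q, 0 <= S n q) ->
  (forall t q, 0 <= A t q <= Abar q) ->
  (forall q, 0 < rho q) ->
  (forall q, (fun t : nat => (\sum_(s < t) A s q) / t%:R) @ \oo --> rho q) ->
  ~ in_region S rho ->
  (forall q, 0 <= eta q) ->
  (exists D : 'M[R]_Q, pos_diag D /\
     forall sigma : nat -> 'I_N, maxweight S D A sigma ->
       forall q, (fun t : nat => qlen A (fun s => S (sigma s)) t q / t%:R)
                   @ \oo --> eta q)
  <->
  (exists alpha : 'I_N -> R,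
     (forall n, 0 <= alpha n) /\ \sum_(n < N) alpha n = 1 /\
     eta = pospart (fun q => rho q - \sum_(n < N) alpha n * S n q) /\
     exists v : 'I_Q -> R,
       (forall q, 0 <= v q) /\
       (forall m : 'I_N, 0 < alpha m -> forall k : 'I_N, dot v (S k) <= dot v (S m)) /\
       (forall q, v q = 0 <-> eta q = 0)).
Proof.
move=> N_gt0 S_ge0 A_bnd _ rho_rate _ eta_ge0; split.
  move=> [D [D_pos D_rate]].
  have [sigma sigma_mw] := maxweight_exists S D A N_gt0.
  have rate := D_rate sigma sigma_mw.
  have freq_bnd t n : `|sched_freq R sigma t n| <= 1.
    by rewrite ger0_norm ?sched_freq_ge0 ?sched_freq_le1.
  have [f f_oo [alpha freq_alpha]] := bounded_cvg_subseq freq_bnd.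
  exists alpha; split; first exact: alpha_ge0 freq_alpha.
  split; first exact: alpha_sum1 f_oo freq_alpha.
  split; first exact: (eta_pospart S_ge0 rho_rate rate f_oo freq_alpha eta_ge0).
  exists (fun q => D q q * eta q); split=> [q|]; first by rewrite mulr_ge0 // ltW // D_pos.2.
  split=> [m|q]; first exact: (alpha_support_opt D_pos sigma_mw rate f_oo freq_alpha).
  split=> [/eqP|->]; last by rewrite mulr0.
  by rewrite mulf_eq0 gt_eqF ?D_pos.2 //= => /eqP.
move=> [alpha [alpha_ge0 [alpha_sum1 [eta_def [v [v_ge0 [v_opt v0]]]]]]].
have [d d_gt0 d_eta] := pos_scaling_exists eta_ge0 v_ge0 v0.
exists (diag_mx (\row_i d i)); split=> [|sigma sigma_mw q]; first exact: pos_diag_mx.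
apply: (qlen_rate S_ge0 A_bnd alpha_ge0 alpha_sum1 eta_def v_opt (pos_diag_mx d_gt0) _
  sigma_mw rho_rate).
by move=> p; rewrite !mxE eqxx mulr1n d_eta.
Qed.
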